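(* Let $n\ge 1$ and let $\pi$ be a permutation of length $n$ that has a distant inverse-descent. Then $\zeta_n$ contains a subsequence order-isomorphic to $\pi$.
   Context: A permutation of length $n$ is a word containing each letter of $[n]=\{1,\dots,n\}$ exactly once. Two words $u,v$ of the same length $k$ over the positive integers are order-isomorphic if for all $i,j\in[k]$, $u(i)>u(j)\iff v(i)>v(j)$. A word $w$ contains a subsequence order-isomorphic to $\pi$ if there are indices $i_1<\cdots<i_n$ with $w(i_1)\cdots w(i_n)$ order-isomorphic to $\pi$. Entries $\pi(j),\pi(k)$ form an inverse-descent if $j<k$ and $\pi(j)=\pi(k)+1$; it is a distant inverse-descent if moreover $k\ge j+2$. The word $z_n$ is the concatenation of $n$ runs $r_1r_2\cdots r_n$, where for odd $k$ the run $r_k$ lists the odd integers in $[n]$ in increasing order and for even $k$ the run $r_k$ lists the even integers in $[n]$ in decreasing order (so $|z_n|=n^2/2$ for even $n$ and $(n^2+1)/2$ for odd $n$). The permutation $\zeta_n$ of length $|z_n|$ is the unique permutation such that for all indices $i\ne j$: $\zeta_n(i)>\zeta_n(j)$ if and only if either $z_n(i)>z_n(j)$, or $z_n(i)=z_n(j)$ and $i<j$. *)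

From mathcomp Require Import all_boot.
Set Implicit Arguments. Unset Strict Implicit. Unset Printing Implicit Defensive.

(* Words are sequences of naturals; positions are 0-indexed internally. *)

Definition is_perm (n : nat) (p : seq nat) : bool := perm_eq p (iota 1 n).

Definition order_iso (u v : seq nat) : bool :=
  (size u == size v) &&
  [forall i : 'I_(size u), forall j : 'I_(size u),
     (nth 0 u j < nth 0 u i) == (nth 0 v j < nth 0 v i)].

Definition contains (w p : seq nat) : Prop :=
  exists m : bitseq, size m = size w /\ order_iso (mask m w) p.

Definition has_distant_inv_descent (p : seq nat) : Prop :=
  exists j k, j.+2 <= k /\ k < size p /\ nth 0 p j = (nth 0 p k).+1.

Definition zrun (n k : nat) : seq nat :=
  if odd k then [seq i <- iota 1 n | odd i]
  else rev [seq i <- iota 1 n | ~~ odd i].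

Definition z_word (n : nat) : seq nat :=
  flatten [seq zrun n k | k <- iota 1 n].

(* zeta_n(i) = 1 + #{ j : z(j) < z(i) or (z(j) = z(i) and i < j) };
   this is the standardization of z_n described in the paper *)
Definition zeta (n : nat) : seq nat :=
  let z := z_word n in
  [seq (count (fun j => (nth 0 z j < nth 0 z i) ||
                        ((nth 0 z j == nth 0 z i) && (i < j)))
              (iota 0 (size z))).+1
  | i <- iota 0 (size z)].

From mathcomp Require Import all_boot zify.
Set Implicit Arguments. Unset Strict Implicit. Unset Printing Implicit Defensive.

(* Merging the values [a.+1 = p j] and [a = p k] of a distant inverse-descent
   gives a word [w] over [1..n-1] with no two equal adjacent letters, from which
   [p] is recovered by standardization: equal letters are ranked by decreasing
   position, as in [zeta n].  It thus suffices to embed [w] or [w + 1] into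
   [z_n].  Embedded greedily, each letter costs [run_gap] runs beyond the
   previous one, and for adjacent letters [x != y] the costs of [(x, y)] and
   [(x.+1, y.+1)] add up to [2]; so the costs of [w] and [w + 1] add up to
   [2n + 1], and one of them fits into the [n] runs of [z_n]. *)

Lemma sub_count_lt (T : eqType) (a1 a2 : pred T) (s : seq T) x :
  subpred a1 a2 -> x \in s -> a2 x -> ~~ a1 x -> count a1 s < count a2 s.
Proof.
move=> sub12; elim: s => // y s IHs; rewrite in_cons => /orP[/eqP <-|xs] a2x a1x /=.
  by rewrite a2x (negbTE a1x) add0n add1n ltnS sub_count.
have := IHs xs a2x a1x; case a1y: (a1 y); first by rewrite (sub12 _ a1y).
by case: (a2 y) => /=; lia.
Qed.

Lemma index_lt_sorted (T : eqType) (r : rel T) s x y :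
  transitive r -> irreflexive r -> sorted r s -> x \in s -> y \in s -> r x y ->
  index x s < index y s.
Proof.
move=> r_tr r_irr s_sorted xs ys rxy; rewrite ltnNge leq_eqVlt.
apply/negP => /orP[/eqP eq_idx|lt_idx].
  by move: rxy; rewrite -(nth_index x xs) -eq_idx nth_index // r_irr.
have ryx := sorted_ltn_index r_tr s_sorted y x ys xs lt_idx.
by move: (r_tr _ _ _ rxy ryx); rewrite r_irr.
Qed.

Lemma ltn_sorted_nth (s : seq nat) i j : sorted ltn s -> i < size s -> j < size s ->
  (nth 0 s i < nth 0 s j) = (i < j).
Proof.
move=> s_sorted ilt jlt; have lt_nth := sorted_ltn_nth ltn_trans 0 s_sorted.
case: (ltngtP i j) => [ij|ji|->]; last by rewrite ltnn.
- exact: lt_nth.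
- by apply/negbTE; rewrite -leqNgt ltnW // lt_nth.
Qed.

Lemma subseq_cons_drop (T : eqType) (y : T) (u l r : seq T) k :
  y \in l -> k <= index y l -> subseq u (drop (index y l).+1 l ++ r) ->
  subseq (y :: u) (drop k l ++ r).
Proof.
move=> yl k_le sub_u; set i := index y l.
have -> : drop k l = take (i - k) (drop k l) ++ y :: drop i.+1 l.
  rewrite -[in LHS](cat_take_drop (i - k) (drop k l)) drop_drop subnK //.
  by rewrite [drop i l](drop_nth y) ?index_mem // nth_index.
by rewrite -catA; apply: subseq_trans (suffix_subseq _ _); rewrite /= eqxx.
Qed.

Lemma mask_nth_iota (s : seq nat) m :
  mask m s = map (nth 0 s) (mask m (iota 0 (size s))).
Proof. by rewrite map_mask map_nth_iota0 // take_size. Qed.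

Definition std_gt (z : nat -> nat) (i j : nat) : bool :=
  (z j < z i) || ((z j == z i) && (i < j)).

Definition standardize (z : seq nat) : seq nat :=
  [seq (count (std_gt (nth 0 z) i) (iota 0 (size z))).+1 | i <- iota 0 (size z)].

Lemma zetaE n : zeta n = standardize (z_word n).
Proof. by []. Qed.

Section StdGt.
Variable z : nat -> nat.

Lemma std_gt_trans : transitive (std_gt z).
Proof.
move=> b a c; rewrite /std_gt => /orP[h|/andP[/eqP e h]] /orP[h'|/andP[/eqP e' h']];
  apply/orP; lia.
Qed.

Lemma std_gt_irr : irreflexive (std_gt z).
Proof. by move=> i; rewrite /std_gt !ltnn andbF. Qed.

Lemma std_gt_total i j : i != j -> std_gt z i j || std_gt z j i.
Proof. by rewrite /std_gt; case: ltngtP => //= _; lia. Qed.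

End StdGt.

Lemma std_gt_map_addn (w : seq nat) sh i j : i < size w -> j < size w ->
  std_gt (nth 0 (map (addn sh) w)) i j = std_gt (nth 0 w) i j.
Proof. by move=> iw jw; rewrite /std_gt !(nth_map 0) // ltn_add2l eqn_add2l. Qed.

Lemma nth_standardize_lt (z : seq nat) i1 i2 : i1 < size z -> i2 < size z ->
  (nth 0 (standardize z) i2 < nth 0 (standardize z) i1) = std_gt (nth 0 z) i1 i2.
Proof.
move=> i1z i2z; rewrite !(nth_map 0) ?size_iota // !nth_iota // !add0n ltnS.
case gt12: (std_gt _ i1 i2).
  apply: (sub_count_lt (x := i2)); rewrite ?mem_iota ?std_gt_irr //.
  by move=> i; apply: std_gt_trans.
apply/negbTE; rewrite -leqNgt; have [<-//|ne12] := eqVneq i1 i2.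
have := std_gt_total (nth 0 z) ne12; rewrite gt12 /= => gt21.
by apply: sub_count => i; apply: std_gt_trans.
Qed.

Lemma contains_standardize (z u p : seq nat) :
  subseq u z -> size u = size p ->
  (forall r1 r2, r1 < size p -> r2 < size p ->
     (nth 0 p r2 < nth 0 p r1) = std_gt (nth 0 u) r1 r2) ->
  contains (standardize z) p.
Proof.
move=> /subseqP[m size_m ->] size_u p_std; set idx := mask m (iota 0 (size z)).
have size_idx : size idx = size p by rewrite -size_u mask_nth_iota size_map.
have idx_lt r : r < size p -> nth 0 idx r < size z.
  by rewrite -size_idx => /(mem_nth 0)/mem_mask; rewrite mem_iota.
have idx_sorted : sorted ltn idx.
  by apply: sorted_mask; [exact: ltn_trans | exact: iota_ltn_sorted].
have size_std : size (standardize z) = size z by rewrite size_map size_iota.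
exists m; split; first by rewrite size_std.
rewrite /order_iso (mask_nth_iota (standardize z)) size_std -/idx.
rewrite size_map size_idx eqxx.
apply/forallP => i; apply/forallP => j; apply/eqP.
rewrite !(nth_map 0 0 (nth 0 (standardize z))) ?size_idx //.
rewrite nth_standardize_lt ?idx_lt // p_std //.
rewrite (mask_nth_iota z) -/idx /std_gt !(nth_map 0) ?size_idx //.
by rewrite (ltn_sorted_nth idx_sorted) ?size_idx.
Qed.

Definition run_order (b : bool) : rel nat := fun x y => if b then x < y else y < x.

(* Embedding the letter [y] greedily after an occurrence of [x] in [z_n] moves
   forward by [run_gap x y] runs: none if [y] comes later in the run of [x],
   one if the parities differ, two otherwise. *)
Definition run_gap (x y : nat) : nat :=
  if odd x != odd y then 1 else if run_order (odd x) x y then 0 else 2.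

Fixpoint run_cost (x : nat) (u : seq nat) : nat :=
  if u is y :: u' then run_gap x y + run_cost y u' else 0.

Lemma run_order_trans b : transitive (run_order b).
Proof. by case: b => y x z /=; lia. Qed.

Lemma run_order_irr b : irreflexive (run_order b).
Proof. by case: b => x; rewrite /= ltnn. Qed.

Lemma run_gapS x y : x != y -> run_gap x y + run_gap x.+1 y.+1 = 2.
Proof.
rewrite /run_gap /run_order /= !ltnS.
by case: (ltngtP x y) => // _ _; case: (odd x); case: (odd y).
Qed.

Lemma run_costS (x : nat) (u : seq nat) : path (fun a b => a != b) x u ->
  run_cost x u + run_cost x.+1 (map succn u) = 2 * size u.
Proof.
elim: u x => [|y u IHu] x //= /andP[xy /IHu]; have := run_gapS xy; lia.
Qed.

Lemma run_cost_shift (w : seq nat) : sorted (fun a b => a != b) w ->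
  exists2 sh, sh <= 1 & run_cost 0 (map (addn sh) w) <= size w.
Proof.
case: w => [|y u] /= u_neq; first by exists 0.
have := run_costS u_neq; have : run_gap 0 y + run_gap 0 y.+1 = 3.
  by rewrite /run_gap /run_order /=; case: (odd y).
case: (leqP (run_gap 0 y + run_cost y u) (size u).+1) => [le0 _ _|gt0 gap_sum cost_sum].
  by exists 0 => //=; rewrite add0n (eq_map add0n) map_id.
by exists 1 => //=; rewrite add1n (eq_map add1n); lia.
Qed.

Lemma odd_add_run_gap t x y : odd x = odd t -> odd (t + run_gap x y) = odd y.
Proof.
rewrite /run_gap => odd_xt; rewrite oddD -odd_xt.
by case: (odd x); case: (odd y); case: (run_order _ x y).
Qed.

Section ZRuns.
Variable n : nat.

Lemma mem_zrun t y : (y \in zrun n t) = (0 < y <= n) && (odd y == odd t).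
Proof.
rewrite /zrun; case: ifP => odd_t; rewrite ?mem_rev mem_filter mem_iota;
  case: (odd y) => /=; lia.
Qed.

Lemma zrun_sorted t : sorted (run_order (odd t)) (zrun n t).
Proof.
rewrite /zrun /run_order; case: ifP => _; last rewrite rev_sorted;
  by apply: sorted_filter => //; [exact: ltn_trans | exact: iota_ltn_sorted].
Qed.

Definition zruns_after (t : nat) : seq nat :=
  flatten [seq zrun n k | k <- iota t.+1 (n - t)].

(* The part of [z_n] strictly after the occurrence of [x] in run [t]; since
   [0] lies in no run, [z_tail 0 0] is all of [z_n]. *)
Definition z_tail (t x : nat) : seq nat :=
  drop (index x (zrun n t)).+1 (zrun n t) ++ zruns_after t.

Lemma z_tail00 : z_tail 0 0 = z_word n.
Proof.
by rewrite /z_tail memNindex ?mem_zrun // drop_oversize // /zruns_after subn0.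
Qed.

Lemma zruns_afterE t s : t < s <= n ->
  zruns_after t =
    flatten [seq zrun n k | k <- iota t.+1 (s - t.+1)] ++ zrun n s ++ zruns_after s.
Proof.
move=> /andP[ts sn]; rewrite /zruns_after.
have -> : n - t = (s - t.+1) + (n - s).+1 by lia.
by rewrite iotaD map_cat flatten_cat (_ : t.+1 + (s - t.+1) = s) //; lia.
Qed.

Lemma subseq_z_tail_later t s x y u : t < s <= n -> y \in zrun n s ->
  subseq u (z_tail s y) -> subseq (y :: u) (z_tail t x).
Proof.
move=> ts ys sub_u; rewrite /z_tail (zruns_afterE ts) catA.
apply: subseq_trans (suffix_subseq _ _).
by rewrite -[zrun n s]drop0; apply: subseq_cons_drop.
Qed.

Lemma subseq_z_tail_same t x y u : x \in zrun n t -> y \in zrun n t ->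
  run_order (odd t) x y -> subseq u (z_tail t y) -> subseq (y :: u) (z_tail t x).
Proof.
move=> xt yt xy sub_u; apply: subseq_cons_drop => //.
exact: (index_lt_sorted (@run_order_trans (odd t)) (@run_order_irr (odd t))
                         (zrun_sorted t)).
Qed.

Lemma subseq_z_tail u : forall t x,
  (x \in zrun n t) || (t == 0) && (x == 0) ->
  all (fun y => 0 < y <= n) u -> t + run_cost x u <= n -> subseq u (z_tail t x).
Proof.
elim: u => [|y u IHu] t x x_at; first by rewrite sub0seq.
move=> /= /andP[y_range u_range] cost_le.
have odd_xt : odd x = odd t.
  by case/orP: x_at => [|/andP[/eqP-> /eqP->]//]; rewrite mem_zrun => /andP[_ /eqP].
have ys : y \in zrun n (t + run_gap x y).
  by rewrite mem_zrun y_range odd_add_run_gap ?eqxx.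
have sub_u : subseq u (z_tail (t + run_gap x y) y).
  by apply: IHu; rewrite ?ys //; lia.
case gap0: (run_gap x y) => [|gap] in cost_le ys sub_u *; last first.
  by apply: subseq_z_tail_later ys sub_u; lia.
move: gap0; rewrite /run_gap; case: ifP => // _; case: ifP => // xy _.
rewrite addn0 in ys sub_u; rewrite odd_xt in xy.
have xt : x \in zrun n t.
  by case/orP: x_at => // /andP[/eqP t0 /eqP x0]; rewrite t0 x0 in xy.
exact: subseq_z_tail_same xy sub_u.
Qed.

Lemma subseq_z_word u :
  all (fun y => 0 < y <= n) u -> run_cost 0 u <= n -> subseq u (z_word n).
Proof.
by move=> u_range cost_le; rewrite -z_tail00; apply: subseq_z_tail; rewrite ?orbT.
Qed.

End ZRuns.

Definition merge (a v : nat) : nat := if v <= a then v else v.-1.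

Lemma merge_ltn a x y : (x < y) = (merge a x < merge a y) || (x == a) && (y == a.+1).
Proof. by rewrite /merge; case: ifP; case: ifP; lia. Qed.

Lemma eq_merge a x y : (merge a x == merge a y) =
  [|| x == y, (x == a) && (y == a.+1) | (x == a.+1) && (y == a)].
Proof. by rewrite /merge; case: ifP; case: ifP; lia. Qed.

Section MergeInverseDescent.
Variables (n j k : nat) (p : seq nat).
Hypotheses (p_perm : is_perm n p) (jk : j.+2 <= k) (k_lt : k < size p)
  (pjk : nth 0 p j = (nth 0 p k).+1).

Let a := nth 0 p k.

Let nth_p_eq r1 r2 : r1 < size p -> r2 < size p ->
  (nth 0 p r1 == nth 0 p r2) = (r1 == r2).
Proof. by move=> r1p r2p; rewrite nth_uniq // (perm_uniq p_perm) iota_uniq. Qed.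

Let mem_p v : (v \in p) = (0 < v <= n).
Proof. by rewrite (perm_mem p_perm) mem_iota; lia. Qed.

Lemma merged_range : all (fun v => 0 < v < n) (map (merge a) p).
Proof.
have j_lt : j < size p by lia.
have := mem_nth 0 k_lt; have := mem_nth 0 j_lt; rewrite !mem_p pjk -/a => ja ka.
by apply/allP => _ /mapP[v + ->]; rewrite mem_p /merge => v_range; case: ifP; lia.
Qed.

Lemma merged_sorted_neq : sorted (fun x y => x != y) (map (merge a) p).
Proof.
apply/(sortedP 0) => i; rewrite size_map => ip.
rewrite /= !(nth_map 0) ?(ltnW ip) // eq_merge /a -pjk !nth_p_eq ?(ltnW ip) //; lia.
Qed.

Lemma merged_std_gt r1 r2 : r1 < size p -> r2 < size p ->
  (nth 0 p r2 < nth 0 p r1) = std_gt (nth 0 (map (merge a) p)) r1 r2.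
Proof.
move=> r1p r2p; rewrite /std_gt !(nth_map 0) // (merge_ltn a) eq_merge.
rewrite /a -pjk !nth_p_eq //; lia.
Qed.

End MergeInverseDescent.

Theorem proposition6p1 (n : nat) (p : seq nat) :
  1 <= n -> is_perm n p -> has_distant_inv_descent p -> contains (zeta n) p.
Proof.
move=> _ p_perm [j [k [jk [k_lt pjk]]]].
set w := map (merge (nth 0 p k)) p.
have size_w : size w = n by rewrite size_map (perm_size p_perm) size_iota.
have [sh sh_le cost_le] := run_cost_shift (merged_sorted_neq p_perm jk k_lt pjk).
rewrite zetaE; apply: (@contains_standardize _ (map (addn sh) w)).
- apply: subseq_z_word; last by rewrite -size_w.
  apply/allP => _ /mapP[v /(allP (merged_range p_perm jk k_lt pjk)) v_range ->]; lia.
- by rewrite !size_map.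
- move=> r1 r2 r1p r2p.
  by rewrite std_gt_map_addn ?size_map // -(merged_std_gt p_perm jk k_lt pjk).
Qed.
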